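(* Fix parameters $0<\varepsilon<f<(1+\varepsilon)/2<1$ and $\sigma>0$. Let $pqr$ be a non-degenerate triangle in $\mathbb{R}^2$ with a designated apex (one of $p,q,r$) and a fixed ordering of its base vertices. Then there exists $\Delta>0$, depending only on the triangle $pqr$, its apex designation, $\varepsilon$, $f$ and $\sigma$, such that the following holds: whenever real values $\tau(p)\le\tau(q)\le\tau(r)$ make the triangle satisfy the adaptive progress constraint $\sigma$, then for every $\delta\in[0,\Delta]$ the values $\tau'(p)=\tau(p)+\delta$, $\tau'(q)=\tau(q)$, $\tau'(r)=\tau(r)$ also make the triangle satisfy the adaptive progress constraint $\sigma$ (with the same apex and base ordering).
   Context: Values at the vertices are extended affinely over the plane; $\tau$ of a midpoint means the value of that affine function. Diminished width: for a triangle written $abc$ with its apex listed first, $\mathrm{dw}(abc):=\min\{(1-\varepsilon)\operatorname{dist}(a,\operatorname{aff}(bc)),\,(1-f)\operatorname{dist}(b,\operatorname{aff}(ac)),\,(1-f)\operatorname{dist}(c,\operatorname{aff}(ab))\}$. Adaptive progress constraint $\sigma$: for a triangle with apex $a$ and base vertices $b,c$ (in the given order), with $d$ the midpoint of $bc$ and $e$ the midpoint of $ac$, require $|\tau(a)-\tau(b)|\le 2\,\mathrm{dw}(dca)\,\sigma$, $|\tau(a)-\tau(d)|\le\mathrm{dw}(abc)\,\sigma$, $|\tau(a)-\tau(c)|\le 2\,\mathrm{dw}(dab)\,\sigma$, and $|\tau(b)-\tau(c)|\le 4\,\mathrm{dw}(ead)\,\sigma$ (first-listed vertex in each $\mathrm{dw}$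 is its apex). *)

From Stdlib Require Import Reals.
Open Scope R_scope.

Definition pt : Type := (R * R)%type.

Definition midpt (x y : pt) : pt := ((fst x + fst y) / 2, (snd x + snd y) / 2).

Definition dist_line (x y z : pt) : R :=
  Rabs ((fst z - fst y) * (snd x - snd y) - (snd z - snd y) * (fst x - fst y))
  / sqrt ((fst z - fst y) ^ 2 + (snd z - snd y) ^ 2).

(* Diminished width of the triangle abc with apex a (listed first). *)
Definition dw (eps f : R) (a b c : pt) : R :=
  Rmin ((1 - eps) * dist_line a b c)
       (Rmin ((1 - f) * dist_line b a c) ((1 - f) * dist_line c a b)).

(* Adaptive progress constraint sigma for the triangle with apex a and base
   vertices b, c (in that order), with values ta tb tc at a b c; values are
   extended affinely, so tau(d) = (tb + tc)/2 for d the midpoint of bc. *)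
Definition apc (eps f sigma : R) (a b c : pt) (ta tb tc : R) : Prop :=
  let d := midpt b c in
  let e := midpt a c in
  let td := (tb + tc) / 2 in
  Rabs (ta - tb) <= 2 * dw eps f d c a * sigma /\
  Rabs (ta - td) <= dw eps f a b c * sigma /\
  Rabs (ta - tc) <= 2 * dw eps f d a b * sigma /\
  Rabs (tb - tc) <= 4 * dw eps f e a d * sigma.

Definition nondegenerate (p q r : pt) : Prop :=
  (fst q - fst p) * (snd r - snd p) - (snd q - snd p) * (fst r - fst p) <> 0.

Inductive vertex : Type := VP | VQ | VR.

From Stdlib Require Import Reals Lra Psatz.
Open Scope R_scope.

(* The constraint asks the four differences
   ta - tb, ta - td, ta - tc, tb - tc to lie in symmetric intervals with
   radii X1..X4 fixed by the geometry, and raising the minimum only shrinks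
   each difference, except for ta - td when the raised vertex is a base
   vertex lying below the apex while the other base vertex lies above it.
   Then ta - td >= -X3/2 (resp. -X1/2), so there is a slack of 2 X2 - X3
   (resp. 2 X2 - X1), positive thanks to the geometric inequality
   dw(d a b) < dw(a b c) for d the midpoint of bc; this is where
   f < (1 + eps)/2 enters. *)

Lemma Rabs_le_elim x b : Rabs x <= b -> -b <= x <= b.
Proof. unfold Rabs; destruct (Rcase_abs x); lra. Qed.

(* The adaptive progress constraint with abstract radii X1..X4; [apc] is by
   definition an instance of it. *)
Definition progress_bounds (X1 X2 X3 X4 ta tb tc : R) : Prop :=
  Rabs (ta - tb) <= X1 /\ Rabs (ta - (tb + tc) / 2) <= X2 /\
  Rabs (ta - tc) <= X3 /\ Rabs (tb - tc) <= X4.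

Definition margin (X1 X2 X3 X4 : R) : R :=
  Rmin (Rmin X1 X2) (Rmin (Rmin X3 X4) (Rmin (2 * X2 - X3) (2 * X2 - X1))).

Lemma margin_pos X1 X2 X3 X4 :
  0 < X1 -> 0 < X2 -> 0 < X3 -> 0 < X4 -> X3 < 2 * X2 -> X1 < 2 * X2 ->
  0 < margin X1 X2 X3 X4.
Proof. intros; unfold margin, Rmin; repeat destruct Rle_dec; lra. Qed.

Lemma le_margin X1 X2 X3 X4 d : d <= margin X1 X2 X3 X4 ->
  d <= X1 /\ d <= X2 /\ d <= X3 /\ d <= X4 /\
  d <= 2 * X2 - X3 /\ d <= 2 * X2 - X1.
Proof. unfold margin, Rmin; repeat destruct Rle_dec; lra. Qed.

Ltac unfold_bounds :=
  unfold progress_bounds in *;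
  repeat match goal with
  | H : _ /\ _ |- _ => destruct H
  | H : Rabs _ <= _ |- _ => apply Rabs_le_elim in H
  end.

Lemma raise_apex X1 X2 X3 X4 ta tb tc d :
  ta <= tb -> ta <= tc -> progress_bounds X1 X2 X3 X4 ta tb tc ->
  0 <= d -> d <= margin X1 X2 X3 X4 ->
  progress_bounds X1 X2 X3 X4 (ta + d) tb tc.
Proof.
  intros ? ? ? ? Hd; apply le_margin in Hd; unfold_bounds.
  repeat split; apply Rabs_le; lra.
Qed.

(* The first base vertex carries the minimal value; if the other base value
   exceeds the apex value, the slack 2 X2 - X3 is used. *)
Lemma raise_first_base X1 X2 X3 X4 ta tb tc d :
  tb <= ta -> tb <= tc -> progress_bounds X1 X2 X3 X4 ta tb tc ->
  0 <= d -> d <= margin X1 X2 X3 X4 ->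
  progress_bounds X1 X2 X3 X4 ta (tb + d) tc.
Proof.
  intros ? ? ? ? Hd; apply le_margin in Hd; unfold_bounds.
  destruct (Rle_dec tc ta); repeat split; apply Rabs_le; lra.
Qed.

(* The second base vertex carries the minimal value (slack 2 X2 - X1). *)
Lemma raise_second_base X1 X2 X3 X4 ta tb tc d :
  tc <= ta -> tc <= tb -> progress_bounds X1 X2 X3 X4 ta tb tc ->
  0 <= d -> d <= margin X1 X2 X3 X4 ->
  progress_bounds X1 X2 X3 X4 ta tb (tc + d).
Proof.
  intros ? ? ? ? Hd; apply le_margin in Hd; unfold_bounds.
  destruct (Rle_dec tb ta); repeat split; apply Rabs_le; lra.
Qed.

(* Twice the signed area of the triangle y z x, and the squared length of yz;
   by definition dist_line x y z = |cross x y z| / sqrt (sqdist y z). *)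
Definition cross (x y z : pt) : R :=
  (fst z - fst y) * (snd x - snd y) - (snd z - snd y) * (fst x - fst y).

Definition sqdist (y z : pt) : R := (fst z - fst y) ^ 2 + (snd z - snd y) ^ 2.

Lemma cross_swap x y z : cross y x z = - cross x y z.
Proof. destruct x, y, z; unfold cross; simpl; ring. Qed.

Lemma cross_rot x y z : cross y z x = cross x y z.
Proof. destruct x, y, z; unfold cross; simpl; ring. Qed.

Lemma sqdist_pos x y z : cross x y z <> 0 -> 0 < sqdist y z.
Proof.
  unfold cross, sqdist; intros Hx.
  destruct (Req_dec (fst z - fst y) 0) as [Hdx | Hdx].
  - destruct (Req_dec (snd z - snd y) 0) as [Hdy | Hdy].
    + exfalso; apply Hx; rewrite Hdx, Hdy; ring.
    + apply Rplus_le_lt_0_compat; [apply pow2_ge_0 |].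
      rewrite <- Rsqr_pow2; apply Rsqr_pos_lt, Hdy.
  - apply Rplus_lt_le_0_compat; [| apply pow2_ge_0].
    rewrite <- Rsqr_pow2; apply Rsqr_pos_lt, Hdx.
Qed.

Lemma height_times_base x y z : cross x y z <> 0 ->
  dist_line x y z * sqrt (sqdist y z) = Rabs (cross x y z).
Proof.
  intros Hx; pose proof (sqrt_lt_R0 _ (sqdist_pos _ _ _ Hx)).
  unfold dist_line; fold (cross x y z) (sqdist y z); field; lra.
Qed.

Lemma dist_line_pos x y z : cross x y z <> 0 -> 0 < dist_line x y z.
Proof.
  intros Hx; pose proof (sqrt_lt_R0 _ (sqdist_pos _ _ _ Hx)).
  unfold dist_line; fold (cross x y z) (sqdist y z).
  apply Rdiv_lt_0_compat; [apply Rabs_pos_lt |]; assumption.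
Qed.

Lemma dist_line_comm x y z : dist_line x y z = dist_line x z y.
Proof.
  unfold dist_line; f_equal.
  - rewrite <- Rabs_Ropp; f_equal; ring.
  - f_equal; ring.
Qed.

Lemma Rabs_half x : Rabs (x / 2) = Rabs x / 2.
Proof. unfold Rdiv; rewrite Rabs_mult, Rabs_inv, (Rabs_pos_eq 2); lra. Qed.

Lemma sqrt_quarter x : 0 <= x -> sqrt (x / 4) = sqrt x / 2.
Proof.
  intros Hx; replace (x / 4) with (Rsqr (/ 2) * x) by (unfold Rsqr; field).
  rewrite sqrt_mult_alt by apply Rle_0_sqr.
  rewrite sqrt_Rsqr by lra; field.
Qed.

(* The line through b and the midpoint of bc is the line bc. *)
Lemma dist_line_midpt_base a b c : cross a b c <> 0 ->
  dist_line a (midpt b c) b = dist_line a b c.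
Proof.
  intros HK.
  assert (Kd : cross a (midpt b c) b = - (cross a b c / 2))
    by (destruct a, b, c; unfold cross, midpt; simpl; field).
  assert (Ld : sqdist (midpt b c) b = sqdist b c / 4)
    by (destruct b, c; unfold sqdist, midpt; simpl; field).
  assert (Hd : cross a (midpt b c) b <> 0) by (rewrite Kd; lra).
  pose proof (height_times_base _ _ _ Hd) as Hmid.
  pose proof (height_times_base _ _ _ HK) as Hbc.
  pose proof (sqrt_lt_R0 _ (sqdist_pos _ _ _ HK)).
  rewrite Kd, Rabs_Ropp, Rabs_half, Ld, sqrt_quarter in Hmid
    by (apply Rlt_le, (sqdist_pos _ _ _ HK)).
  apply Rmult_eq_reg_r with (sqrt (sqdist b c)); lra.
Qed.

Lemma dist_line_midpt_apex a b c :
  dist_line (midpt b c) a b = dist_line c a b / 2.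
Proof.
  assert (Kd : cross (midpt b c) a b = cross c a b / 2)
    by (destruct a, b, c; unfold cross, midpt; simpl; field).
  unfold dist_line; fold (cross (midpt b c) a b) (cross c a b) (sqdist a b).
  rewrite Kd, Rabs_half; unfold Rdiv; ring.
Qed.

(* With d the midpoint of bc: the height from b onto ac is exceeded by the
   height from a onto bc (if ac is shorter than bc) or by the height from b
   onto the median da (otherwise, since then the median is longer than
   half of ac, by Apollonius' identity). *)
Lemma median_or_base_height a b c : cross a b c <> 0 ->
  Rmin (dist_line a b c) (dist_line b (midpt b c) a) < dist_line b a c.
Proof.
  intros HK; set (d := midpt b c).
  assert (Kb : cross b a c = - cross a b c) by apply cross_swap.
  assert (Kd : cross b d a = cross a b c / 2)
    by (destruct a, b, c; unfold d, cross, midpt; simpl; field).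
  assert (Apollonius : 4 * sqdist d a = 2 * sqdist a b + 2 * sqdist a c - sqdist b c)
    by (destruct a, b, c; unfold d, sqdist, midpt; simpl; field).
  assert (Hb : cross b a c <> 0) by (rewrite Kb; lra).
  assert (Hd : cross b d a <> 0) by (rewrite Kd; lra).
  assert (Lab : 0 < sqdist a b) by (apply (sqdist_pos c); rewrite <- cross_rot; exact HK).
  pose proof (height_times_base _ _ _ HK) as HA.
  pose proof (height_times_base _ _ _ Hb) as HB.
  pose proof (height_times_base _ _ _ Hd) as HM.
  rewrite Kb, Rabs_Ropp in HB; rewrite Kd, Rabs_half in HM.
  pose proof (dist_line_pos _ _ _ HK); pose proof (dist_line_pos _ _ _ Hb).
  pose proof (sqrt_sqrt _ (Rlt_le _ _ (sqdist_pos _ _ _ HK))).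
  pose proof (sqrt_sqrt _ (Rlt_le _ _ (sqdist_pos _ _ _ Hb))).
  pose proof (sqrt_sqrt _ (Rlt_le _ _ (sqdist_pos _ _ _ Hd))).
  pose proof (sqrt_lt_R0 _ (sqdist_pos _ _ _ HK)).
  pose proof (sqrt_lt_R0 _ (sqdist_pos _ _ _ Hb)).
  pose proof (sqrt_lt_R0 _ (sqdist_pos _ _ _ Hd)).
  set (A := sqrt (sqdist a c)) in *; set (B := sqrt (sqdist b c)) in *;
    set (M := sqrt (sqdist d a)) in *.
  destruct (Rlt_or_le A B) as [AB | BA].
  - apply Rle_lt_trans with (dist_line a b c); [apply Rmin_l | nra].
  - apply Rle_lt_trans with (dist_line b d a); [apply Rmin_r |].
    assert (Median : A < 2 * M) by nra.
    nra.
Qed.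

(* Each of the
   three terms of dw(abc) dominates one term of dw(dab): the apex term
   because eps < f, the c-term because (1 - eps)/2 < 1 - f, and the b-term
   by [median_or_base_height]. *)
Lemma dw_midpt_lt eps f a b c :
  0 < eps -> eps < f -> f < (1 + eps) / 2 -> cross a b c <> 0 ->
  dw eps f (midpt b c) a b < dw eps f a b c.
Proof.
  intros Heps Hef Hf HK; unfold dw.
  rewrite dist_line_midpt_base, dist_line_midpt_apex by exact HK.
  assert (HKc : cross c a b <> 0) by (rewrite <- cross_rot; exact HK).
  pose proof (dist_line_pos _ _ _ HK); pose proof (dist_line_pos _ _ _ HKc).
  apply Rmin_glb_lt; [| apply Rmin_glb_lt].
  - apply Rle_lt_trans with ((1 - f) * dist_line a b c); [| nra].
    eapply Rle_trans; [apply Rmin_r | apply Rmin_l].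
  - apply Rle_lt_trans with
      (Rmin ((1 - f) * dist_line a b c) ((1 - f) * dist_line b (midpt b c) a));
      [apply Rmin_r |].
    pose proof (median_or_base_height _ _ _ HK) as Hmedian; revert Hmedian.
    unfold Rmin; repeat destruct Rle_dec; nra.
  - apply Rle_lt_trans with ((1 - eps) * (dist_line c a b / 2)); [apply Rmin_l | nra].
Qed.

Lemma dw_comm eps f a b c : dw eps f a b c = dw eps f a c b.
Proof.
  unfold dw; rewrite (dist_line_comm a b c), (Rmin_comm ((1 - f) * dist_line b a c)).
  reflexivity.
Qed.

Lemma midpt_comm b c : midpt b c = midpt c b.
Proof. unfold midpt; f_equal; field. Qed.

Lemma dw_pos eps f x y z : eps < 1 -> f < 1 -> cross x y z <> 0 ->
  0 < dw eps f x y z.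
Proof.
  intros He Hf Hx.
  assert (Hy : cross y x z <> 0) by (rewrite cross_swap; lra).
  assert (Hz : cross z x y <> 0) by (rewrite <- cross_rot; exact Hx).
  pose proof (dist_line_pos _ _ _ Hx); pose proof (dist_line_pos _ _ _ Hy);
    pose proof (dist_line_pos _ _ _ Hz).
  unfold dw; repeat apply Rmin_glb_lt; nra.
Qed.

Definition apc_margin (eps f sigma : R) (a b c : pt) : R :=
  margin (2 * dw eps f (midpt b c) c a * sigma) (dw eps f a b c * sigma)
         (2 * dw eps f (midpt b c) a b * sigma)
         (4 * dw eps f (midpt a c) a (midpt b c) * sigma).

(* All four radii are positive (the subtriangles d c a, d a b, e a d are
   non-degenerate) and both slacks are positive by [dw_midpt_lt], applied
   to abc and to acb. *)
Lemma apc_margin_pos eps f sigma a b c :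
  0 < eps -> eps < f -> f < (1 + eps) / 2 -> 0 < sigma -> cross a b c <> 0 ->
  0 < apc_margin eps f sigma a b c.
Proof.
  intros Heps Hef Hf Hsigma HK.
  assert (He1 : eps < 1) by lra; assert (Hf1 : f < 1) by lra.
  assert (Kdca : cross (midpt b c) c a = cross a b c / 2)
    by (destruct a, b, c; unfold cross, midpt; simpl; field).
  assert (Kdab : cross (midpt b c) a b = cross a b c / 2)
    by (destruct a, b, c; unfold cross, midpt; simpl; field).
  assert (Kead : cross (midpt a c) a (midpt b c) = cross a b c / 4)
    by (destruct a, b, c; unfold cross, midpt; simpl; field).
  assert (Kacb : cross a c b = - cross a b c)
    by (destruct a, b, c; unfold cross; simpl; ring).
  pose proof (dw_pos eps f _ _ _ He1 Hf1 HK).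
  pose proof (dw_pos eps f (midpt b c) c a He1 Hf1 ltac:(rewrite Kdca; lra)).
  pose proof (dw_pos eps f (midpt b c) a b He1 Hf1 ltac:(rewrite Kdab; lra)).
  pose proof (dw_pos eps f (midpt a c) a (midpt b c) He1 Hf1 ltac:(rewrite Kead; lra)).
  pose proof (dw_midpt_lt eps f a b c Heps Hef Hf HK) as Hlt_b.
  pose proof (dw_midpt_lt eps f a c b Heps Hef Hf ltac:(rewrite Kacb; lra)) as Hlt_c.
  rewrite (midpt_comm c b), (dw_comm eps f (midpt b c) a c), (dw_comm eps f a c b)
    in Hlt_c.
  apply margin_pos; nra.
Qed.

(* Any labelling of a non-degenerate triangle by apex and base is
   non-degenerate, since |cross| is invariant under permuting vertices. *)
Lemma cross_labelled_nonzero (pos : vertex -> pt) (va vb vc : vertex) :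
  nondegenerate (pos VP) (pos VQ) (pos VR) ->
  va <> vb -> va <> vc -> vb <> vc -> cross (pos va) (pos vb) (pos vc) <> 0.
Proof.
  unfold nondegenerate, cross; intros Hnd Hab Hac Hbc.
  destruct va, vb, vc; try congruence;
    destruct (pos VP) as [p1 p2], (pos VQ) as [q1 q2], (pos VR) as [r1 r2];
    simpl in *; lra.
Qed.

(* pos gives the positions of p, q, r; va is the apex, (vb, vc) the ordered base. *)
Theorem mainTheorem8 (eps f sigma : R)
  (Heps : 0 < eps) (Hef : eps < f) (Hf1 : f < (1 + eps) / 2) (Hf2 : (1 + eps) / 2 < 1)
  (Hsigma : 0 < sigma)
  (pos : vertex -> pt) (Hnd : nondegenerate (pos VP) (pos VQ) (pos VR))
  (va vb vc : vertex) (Hab : va <> vb) (Hac : va <> vc) (Hbc : vb <> vc) :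
  exists Delta : R, 0 < Delta /\
    forall tau : vertex -> R,
      tau VP <= tau VQ -> tau VQ <= tau VR ->
      apc eps f sigma (pos va) (pos vb) (pos vc) (tau va) (tau vb) (tau vc) ->
      forall delta : R, 0 <= delta -> delta <= Delta ->
        let tau' := fun v => match v with VP => tau VP + delta | _ => tau v end in
        apc eps f sigma (pos va) (pos vb) (pos vc) (tau' va) (tau' vb) (tau' vc).
Proof.
  pose proof (cross_labelled_nonzero pos va vb vc Hnd Hab Hac Hbc) as HK.
  exists (apc_margin eps f sigma (pos va) (pos vb) (pos vc)); split.
  { apply apc_margin_pos; assumption. }
  intros tau Hpq Hqr Happ delta Hd0 HdD tau'; unfold tau'.
  (* p carries the minimal value; it is the apex or one of the base vertices. *)
  destruct va, vb, vc; try congruence; simpl;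
    first [apply raise_apex | apply raise_first_base | apply raise_second_base];
    solve [lra | assumption].
Qed.
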